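(* Let $T_1$ be a quadtree in $\mathbb{R}^d$ and $T^*$ its extended quadtree. Let $C_1,C_2$ be two family related (possibly non-leaf) cells of $T^*$ with $|C_1|\le|C_2|$. Then the brand of $C_2$ is at most the brand of $C_1$.
   Context: A quadtree on an axis-aligned root hypercube $R\subset\mathbb{R}^d$ is a hierarchical decomposition in which every node has an associated axis-aligned hypercube (cell) and is either a leaf or has $2^d$ equal-sized children whose cells subdivide its cell. The size $|C|$ of a cell is its edge length. Two cells are neighbors if they are interior-disjoint and share (part of) a $(d-1)$-dimensional facet. Two cells $C_1,C_2$ with $|C_1|\le|C_2|$ are family related if the parent of $C_2$ is an ancestor of $C_1$ (they need not be neighbors). For an integer $j$, a cell $C$ is $2^j$-smooth if every leaf neighboring $C$ has size at most $2^j|C|$. Extended quadtree: the cells of $T_1$ get brand $1$. Recursively, for $j\ge1$, let $T^j$ be the quadtree formed by $\bigcup_{i\le j}T_i$, and let $T_{j+1}$ be the minimal set of cells obtained by splitting cells of $T^j$ such that every cell of $T_j$ is $2^j$-smooth in the resulting quadtree; the cells of $T_{j+1}$ get brand $j+1$. The extended quadtree is $T^*=T^{d+1}$. *)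

From mathcomp Require Import all_boot all_order all_algebra.
Set Implicit Arguments. Unset Strict Implicit. Unset Printing Implicit Defensive.
Import Order.TTheory GRing.Theory Num.Theory.
Local Open Scope ring_scope.

(* A (dyadic) cell of the root cube: level k and integer position a, denoting
   the cube  prod_i [a_i / 2^k, (a_i+1) / 2^k]  (root cube normalized to [0,1]^d). *)
Definition cell (d : nat) : Type := (nat * {ffun 'I_d -> nat})%type.

Section Cells.
Variable d : nat.
Implicit Types c p q : cell d.

Definition lvl c : nat := c.1.
Definition pos c : {ffun 'I_d -> nat} := c.2.

Definition valid c : Prop := forall i, (pos c i < 2 ^ lvl c)%N.

Definition root_cell : cell d := (0%N, [ffun _ => 0%N]).

Definition is_child c p : Prop :=
  lvl c = (lvl p).+1 /\ forall i, (pos c i %/ 2 = pos p i)%N.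

Definition parent_of p c : Prop := is_child c p.

Definition ancestor a c : Prop :=
  (lvl a <= lvl c)%N /\ forall i, (pos c i %/ 2 ^ (lvl c - lvl a) = pos a i)%N.

Definition lo c (i : 'I_d) : rat := (pos c i)%:R / (2 ^+ lvl c).
Definition hi c (i : 'I_d) : rat := (pos c i).+1%:R / (2 ^+ lvl c).
Definition cell_size c : rat := (2 ^+ lvl c)^-1.

Definition interior_disjoint c1 c2 : Prop :=
  exists i, hi c1 i <= lo c2 i \/ hi c2 i <= lo c1 i.

Definition share_facet_part c1 c2 : Prop :=
  exists j, (hi c1 j = lo c2 j \/ hi c2 j = lo c1 j) /\
    forall i, i != j -> lo c1 i < hi c2 i /\ lo c2 i < hi c1 i.

Definition neighbors c1 c2 : Prop := interior_disjoint c1 c2 /\ share_facet_part c1 c2.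

(* family related, for |C1| <= |C2|: the parent of C2 is an ancestor of C1 *)
Definition family_related c1 c2 : Prop :=
  exists p, parent_of p c2 /\ ancestor p c1.

Record quadtree (T : cell d -> Prop) : Prop := {
  qt_root : T root_cell;
  qt_valid : forall c, T c -> valid c;
  qt_parent : forall c, T c -> (0 < lvl c)%N -> exists p, T p /\ parent_of p c;
  qt_children : forall p c c', T c -> is_child c p -> is_child c' p -> T c';
  qt_finite : exists s : seq (cell d), forall c, T c -> c \in s
}.

Definition leaf (T : cell d -> Prop) c : Prop :=
  T c /\ forall c', is_child c' c -> ~ T c'.

Definition smooth (T : cell d -> Prop) (j : nat) c : Prop :=
  forall L, leaf T L -> neighbors L c -> cell_size L <= 2 ^+ j * cell_size c.

(* ext T1 n = (T^(n+1), T_(n+1)) : the tree formed by the first n+1 brands and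
   the cells of brand n+1.  T^(j+1) is the minimal quadtree containing T^j in
   which every cell of T_j is 2^j-smooth (the intersection of all such trees). *)
Fixpoint ext (T1 : cell d -> Prop) (n : nat) : (cell d -> Prop) * (cell d -> Prop) :=
  match n with
  | 0 => (T1, T1)
  | m.+1 =>
      let Tj := (ext T1 m).1 in
      let Bj := (ext T1 m).2 in
      let Tj1 := fun c => forall Q, quadtree Q -> (forall x, Tj x -> Q x) ->
                   (forall x, Bj x -> smooth Q m.+1 x) -> Q c in
      (Tj1, fun c => Tj1 c /\ ~ Tj c)
  end.

Definition extended (T1 : cell d -> Prop) : cell d -> Prop := (ext T1 d).1.

Definition has_brand (T1 : cell d -> Prop) c (j : nat) : Prop :=
  (1 <= j <= d.+1)%N /\ (ext T1 j.-1).2 c.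

End Cells.

(* Every tree T^j of the construction is closed under taking parents and under
   completing the set of children of a split cell.  If C2 is family related to
   the smaller cell C1, the ancestor of C1 at the level of C2 is a sibling of C2;
   so C2 belongs to every T^j containing C1, in particular to T^b1 where b1 is
   the brand of C1, and C2 cannot have been created later than C1. *)
From mathcomp Require Import all_boot all_order all_algebra.
Import Order.TTheory GRing.Theory Num.Theory.
Local Open Scope ring_scope.
Set Implicit Arguments. Unset Strict Implicit.

Section Closure.
Variable d : nat.
Implicit Types (c p : cell d) (S : cell d -> Prop).

Definition parent_cell c : cell d := ((lvl c).-1, [ffun i => (pos c i %/ 2)%N]).

Definition ancestor_at (k : nat) c : cell d :=
  (k, [ffun i => (pos c i %/ 2 ^ (lvl c - k))%N]).

Definition parent_closed S := forall c, S c -> (0 < lvl c)%N -> S (parent_cell c).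

Definition sibling_closed S :=
  forall p c c', S c -> is_child c p -> is_child c' p -> S c'.

Lemma is_child_parent_cell p c : is_child c p -> p = parent_cell c.
Proof.
case: p => l f [/= lvlc posE]; rewrite /parent_cell lvlc; congr pair.
by apply/ffunP => i; rewrite ffunE posE.
Qed.

Lemma ancestor_at_lvl c : ancestor_at (lvl c) c = c.
Proof.
by case: c => l f; congr pair; apply/ffunP => i; rewrite ffunE subnn divn1.
Qed.

Lemma ancestor_at_parent_cell k c :
  (k < lvl c)%N -> ancestor_at k (parent_cell c) = ancestor_at k c.
Proof.
move=> ltkc; congr pair; apply/ffunP => i; rewrite !ffunE /= -divnMA -expnS.
have lvl_gt0 : (0 < lvl c)%N by apply: leq_ltn_trans ltkc.
by rewrite -subSn ?prednK // -ltnS prednK.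
Qed.

Lemma ancestor_at_closed S c k :
  parent_closed S -> S c -> (k <= lvl c)%N -> S (ancestor_at k c).
Proof.
move=> parS Sc /subnKC/esym; move: (lvl c - k)%N => n.
elim: n c Sc => [|n IHn] c Sc lvlE.
  by rewrite addn0 in lvlE; rewrite -lvlE ancestor_at_lvl.
have ltkc : (k < lvl c)%N by rewrite lvlE addnS ltnS leq_addr.
rewrite -ancestor_at_parent_cell //; apply: IHn.
  exact: parS (leq_ltn_trans _ ltkc).
by rewrite /= lvlE addnS.
Qed.

Lemma is_child_ancestor_at p c :
  ancestor p c -> (lvl p < lvl c)%N -> is_child (ancestor_at (lvl p).+1 c) p.
Proof.
case=> _ posE ltpc; split=> // i; rewrite ffunE -posE -divnMA -expnSr.
by rewrite /= subnSK.
Qed.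

Lemma family_related_closed S c1 c2 :
  parent_closed S -> sibling_closed S ->
  family_related c1 c2 -> (lvl c2 <= lvl c1)%N -> S c1 -> S c2.
Proof.
move=> parS sibS [p [childc2 ancp]] lec21 Sc1.
have lvlc2 : lvl c2 = (lvl p).+1 by case: childc2.
have ltpc1 : (lvl p < lvl c1)%N by rewrite -lvlc2.
apply: (sibS p (ancestor_at (lvl p).+1 c1)) childc2; last exact: is_child_ancestor_at.
exact: ancestor_at_closed.
Qed.

Lemma quadtree_parent_closed S : quadtree S -> parent_closed S.
Proof.
move=> qtS c Sc lvlc; have [p [Sp pc]] := qt_parent qtS Sc lvlc.
by rewrite -(is_child_parent_cell pc).
Qed.

Lemma quadtree_sibling_closed S : quadtree S -> sibling_closed S.
Proof. exact: qt_children. Qed.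

Variable T1 : cell d -> Prop.
Hypothesis qtT1 : quadtree T1.

Lemma ext_parent_closed m : parent_closed (ext T1 m).1.
Proof.
case: m => [|m]; first exact: quadtree_parent_closed.
move=> c Sc lvlc /= Q qtQ subQ smoothQ.
apply: (quadtree_parent_closed qtQ) lvlc; exact: Sc.
Qed.

Lemma ext_sibling_closed m : sibling_closed (ext T1 m).1.
Proof.
case: m => [|m]; first exact: quadtree_sibling_closed.
move=> p c c' Sc childc childc' /= Q qtQ subQ smoothQ.
apply: (quadtree_sibling_closed qtQ) childc childc'; exact: Sc.
Qed.

Lemma ext_mono m n c : (m <= n)%N -> (ext T1 m).1 c -> (ext T1 n).1 c.
Proof.
elim: n => [|n IHn]; first by rewrite leqn0 => /eqP ->.
rewrite leq_eqVlt => /orP [/eqP -> //| lemn] Sc /= Q _ subQ _.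
exact/subQ/IHn.
Qed.

Lemma has_brand_ext c b : has_brand T1 c b -> (ext T1 b.-1).1 c.
Proof. by case=> _; case: b.-1 => [//|m] []. Qed.

Lemma has_brand_notin_ext c b : has_brand T1 c b.+2 -> ~ (ext T1 b).1 c.
Proof. by case=> _ []. Qed.

End Closure.

Lemma cell_size_le_lvl d (c1 c2 : cell d) :
  cell_size c1 <= cell_size c2 -> (lvl c2 <= lvl c1)%N.
Proof.
rewrite /cell_size lef_pV2 ?qualifE /= ?exprn_gt0 //.
by rewrite ler_eXn2l // ltr1n.
Qed.

Theorem lemma15 (d : nat) (T1 : cell d -> Prop) (hT1 : quadtree T1)
  (C1 C2 : cell d) (b1 b2 : nat) :
  extended T1 C1 -> extended T1 C2 ->
  family_related C1 C2 -> cell_size C1 <= cell_size C2 ->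
  has_brand T1 C1 b1 -> has_brand T1 C2 b2 ->
  (b2 <= b1)%N.
Proof.
(* Membership in T* is already implied by having a brand. *)
move=> _ _ famC sizeC brand1 brand2.
have C2_in : (ext T1 b1.-1).1 C2.
  apply: family_related_closed famC (cell_size_le_lvl sizeC) (has_brand_ext brand1).
    exact: ext_parent_closed.
  exact: ext_sibling_closed.
rewrite leqNgt; apply/negP => ltb12.
have b1_gt0 : (0 < b1)%N by case: brand1 => /andP [].
case: b2 ltb12 brand2 => [|[|b2]] // ltb12 brand2.
  by move: ltb12; rewrite ltnS leqNgt b1_gt0.
apply: has_brand_notin_ext brand2 (ext_mono _ C2_in).
by rewrite -ltnS prednK.
Qed.
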